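(* Let $\rho$ be a Drinfeld $\mathbb{F}_q[t]$-module of rank $r$ defined over a field $K\subseteq\overline{k}$, let $\omega_1,\dots,\omega_r$ be an $A$-basis of $\Lambda_\rho$, and let $\mathbf{f}=[f_1,\dots,f_r]^{\mathrm{tr}}$ with $f_i=\sum_{m\ge0}\exp_\rho(\omega_i/\theta^{m+1})t^m\in K^{\mathrm{sep}}[[t]]$. Then for every $\epsilon\in\mathrm{Gal}(K^{\mathrm{sep}}/K)$, $\epsilon(\mathbf{f})=g_\epsilon\mathbf{f}$, where $\epsilon$ acts on $K^{\mathrm{sep}}[[t]]$ coefficientwise and entrywise.
   Context: $\mathbb{F}_q$ is the field with $q$ elements, $\theta,t$ independent variables, $A=\mathbb{F}_q[\theta]$, $k=\mathbb{F}_q(\theta)$, $\mathbb{C}_\infty$ the completion of an algebraic closure of $\mathbb{F}_q((1/\theta))$, $\overline{k}$ the algebraic closure of $k$ in $\mathbb{C}_\infty$, $K^{\mathrm{sep}}$ the separable closure of $K$ in $\overline{k}$. $\tau$ is the $q$-power Frobenius; a Drinfeld $\mathbb{F}_q[t]$-module of rank $r$ over $K$ is the $\mathbb{F}_q$-algebra map $\rho:\mathbb{F}_q[t]\to K[\tau]$ determined by $\rho_t=\theta+\kappa_1\tau+\dots+\kappa_r\tau^r$ ($\kappa_r\ne0$), acting on $\mathbb{C}_\infty$ by $(\sum c_i\tau^i)(x)=\sum c_ix^{q^i}$ and making $\mathbb{C}_\infty$ an $\mathbb{F}_q[t]$-module. $\exp_\rho$ is the unique entire $\mathbb{F}_q$-linear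 series $z+\sum_{i\ge1}\alpha_iz^{q^i}$ with $\exp_\rho(\theta z)=\rho_t(\exp_\rho(z))$, and $\Lambda_\rho=\ker\exp_\rho$ (free of rank $r$ over $A$). Put $\xi_{i,m}=\exp_\rho(\omega_i/\theta^{m+1})$, $x_i=(\xi_{i,0},\xi_{i,1},\dots)$; these form an $\mathbb{F}_q[[t]]$-basis of the Tate module $T_t(\rho)=\varprojlim\rho[t^m]$. $\mathrm{Gal}(K^{\mathrm{sep}}/K)$ acts on $T_t(\rho)$ by a representation $\varphi_t$, and $g_\epsilon\in\mathrm{GL}_r(\mathbb{F}_q[[t]])$ is defined by $\varphi_t(\epsilon)\mathbf{x}=g_\epsilon\mathbf{x}$, $\mathbf{x}=[x_1,\dots,x_r]^{\mathrm{tr}}$. *)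

From HB Require Import structures.
From mathcomp Require Import all_boot all_order all_algebra all_field.
From mathcomp Require Import reals.
Set Implicit Arguments. Unset Strict Implicit. Unset Printing Implicit Defensive.
Import Order.TTheory GRing.Theory Num.Theory.
Local Open Scope ring_scope.

Section Defs.
Variables (F : finFieldType) (R : realType) (C : closedFieldType).
Variables (abs : C -> R) (iota : {rmorphism F -> C}) (theta : C).

Local Notation q := #|F|.

Definition seq_cvg_to (u : nat -> C) (l : C) : Prop :=
  forall e : R, 0 < e -> exists N : nat, forall n, (N <= n)%N -> abs (u n - l) < e.

Definition seq_cauchy (u : nat -> C) : Prop :=
  forall e : R, 0 < e -> exists N : nat,
    forall n m, (N <= n)%N -> (N <= m)%N -> abs (u n - u m) < e.

Definition nonarch_complete_abs : Prop :=
  [/\ forall x, abs x = 0 <-> x = 0,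
      forall x, 0 <= abs x,
      forall x y, abs (x * y) = abs x * abs y,
      forall x y, abs (x + y) <= Num.max (abs x) (abs y) &
      forall u, seq_cauchy u -> exists l, seq_cvg_to u l].

(** a(theta) for a in A = F_q[theta]. *)
Definition Aval (a : {poly F}) : C := (map_poly iota a).[theta].
Definition inA (c : C) : Prop := exists a : {poly F}, c = Aval a.

(** x lies in kbar: algebraic over k = F_q(theta). *)
Definition in_kbar (x : C) : Prop :=
  exists p : {poly C}, [/\ p != 0, forall i, inA p`_i & root p x].

Definition is_subfield (K : C -> Prop) : Prop :=
  [/\ K 0, K 1, forall x y, K x -> K y -> K (x - y),
      forall x y, K x -> K y -> K (x * y) & forall x, K x -> K x^-1].

Definition Ksep (K : C -> Prop) (x : C) : Prop :=
  exists p : {poly C}, [/\ p != 0, forall i, K p`_i, separable_poly p & root p x].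

Definition is_gal_elt (K : C -> Prop) (eps : C -> C) : Prop :=
  [/\ forall x, Ksep K x -> Ksep K (eps x),
      forall y, Ksep K y -> exists x, Ksep K x /\ eps x = y &
      forall x y, Ksep K x -> Ksep K y -> eps x = eps y -> x = y] /\
  [/\ forall x y, Ksep K x -> Ksep K y -> eps (x + y) = eps x + eps y,
      forall x y, Ksep K x -> Ksep K y -> eps (x * y) = eps x * eps y &
      forall x, K x -> eps x = x].

Definition rho_t (r : nat) (kappa : nat -> C) (x : C) : C :=
  theta * x + \sum_(1 <= j < r.+1) kappa j * x ^+ (q ^ j)%N.

(** Partial sums of z + sum_{i>=1} alpha_i z^{q^i} (alpha 0 = 1). *)
Definition exp_partial (alpha : nat -> C) (z : C) (n : nat) : C :=
  \sum_(i < n) alpha i * z ^+ (q ^ i)%N.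

Definition exp_at (alpha : nat -> C) (z w : C) : Prop :=
  seq_cvg_to (exp_partial alpha z) w.

(** alpha are the coefficients of exp_rho: the (unique) entire F_q-linear
    series z + sum alpha_i z^{q^i} with exp(theta z) = rho_t(exp z). *)
Definition is_exp_coeffs (r : nat) (kappa : nat -> C) (alpha : nat -> C) : Prop :=
  [/\ alpha 0%N = 1,
      forall z, exists w, exp_at alpha z w &
      forall z w, exp_at alpha z w -> exp_at alpha (theta * z) (rho_t r kappa w)].

Definition is_A_basis_lattice (r : nat) (alpha : nat -> C) (omega : 'I_r -> C) : Prop :=
  [/\ forall i, exp_at alpha (omega i) 0,
      forall lam, exp_at alpha lam 0 ->
        exists a : 'I_r -> {poly F}, lam = \sum_(i < r) Aval (a i) * omega i &
      forall a : 'I_r -> {poly F},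
        \sum_(i < r) Aval (a i) * omega i = 0 -> forall i, a i = 0].

(** Action of a matrix g in M_r(F_q[[t]]) (g i j n = coefficient of t^n)
    on r-tuples of elements of T_t(rho), an element of T_t(rho) being a
    sequence (x_m)_m with x_m in rho[t^{m+1}]; t^n acts via rho_{t^n}
    componentwise, c in F_q via scalar multiplication.  Component m of
    the i-th entry (terms with n > m vanish on rho[t^{m+1}]). *)
Definition tate_act (r : nat) (kappa : nat -> C) (g : 'I_r -> 'I_r -> nat -> F)
    (x : 'I_r -> nat -> C) (i : 'I_r) (m : nat) : C :=
  \sum_(j < r) \sum_(n < m.+1) iota (g i j n) * iter n (rho_t r kappa) (x j m).

(** Coefficient of t^m of the i-th entry of g f, in C[[t]] (power series
    with coefficient m given by f j m). *)
Definition psmat_mul (r : nat) (g : 'I_r -> 'I_r -> nat -> F)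
    (f : 'I_r -> nat -> C) (i : 'I_r) (m : nat) : C :=
  \sum_(j < r) \sum_(n < m.+1) iota (g i j n) * f j (m - n)%N.

End Defs.

From HB Require Import structures.
From mathcomp Require Import all_boot all_order all_algebra all_field.
From mathcomp Require Import reals.
From mathcomp Require Import ring lra.
Set Implicit Arguments. Unset Strict Implicit. Unset Printing Implicit Defensive.
Import Order.TTheory GRing.Theory Num.Theory.
Local Open Scope ring_scope.

(* The coefficients xi_{i,m} = exp(omega_i / theta^(m+1)) satisfy
   rho_t(xi_{i,m+1}) = xi_{i,m}, by the functional equation of exp.  Hence
   rho_{t^n}(xi_{i,m}) = xi_{i,m-n}, so the action of t^n on the Tate module
   is the shift of coefficients of f_i, i.e. multiplication by t^n in
   K^sep[[t]].  The action of g_eps on T_t(rho) therefore becomes the matrix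
   product g_eps f, which is the claim. *)

Section UltrametricLimits.
Variables (R : realType) (C : closedFieldType) (abs : C -> R).
Hypothesis abs_ultra : nonarch_complete_abs abs.

Lemma abs1 : abs 1 = 1.
Proof.
case: abs_ultra => abs_eq0 _ absM _ _.
have abs1_neq0 : abs 1 != 0 by apply/eqP => /abs_eq0/eqP; rewrite oner_eq0.
by apply: (mulfI abs1_neq0); rewrite -absM !mulr1.
Qed.

Lemma absN (x : C) : abs (- x) = abs x.
Proof.
case: abs_ultra => _ abs_ge0 absM _ _.
have absN1 : abs (-1) = 1.
  have sq := absM (-1) (-1); rewrite mulrNN mulr1 abs1 in sq.
  have := abs_ge0 (-1); nra.
by rewrite -mulN1r absM absN1 mul1r.
Qed.

Lemma cvg_to_unique (u : nat -> C) (l1 l2 : C) :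
  seq_cvg_to abs u l1 -> seq_cvg_to abs u l2 -> l1 = l2.
Proof.
move=> cvg1 cvg2; case: abs_ultra => abs_eq0 abs_ge0 _ abs_ultraD _.
have [/eqP/abs_eq0/eqP|d_neq0] := boolP (abs (l1 - l2) == 0).
  by rewrite subr_eq0 => /eqP.
have d_gt0 : 0 < abs (l1 - l2) by rewrite lt0r d_neq0 abs_ge0.
have [N1 near1] := cvg1 _ d_gt0; have [N2 near2] := cvg2 _ d_gt0.
set v := u (maxn N1 N2).
have lt1 : abs (v - l1) < abs (l1 - l2) by apply: near1; exact: leq_maxl.
have lt2 : abs (v - l2) < abs (l1 - l2) by apply: near2; exact: leq_maxr.
have splitD : l1 - l2 = (v - l2) + - (v - l1) by ring.
have := abs_ultraD (v - l2) (- (v - l1)); rewrite -splitD absN le_max.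
by case/orP => [/le_lt_trans/(_ lt2)|/le_lt_trans/(_ lt1)]; rewrite ltxx.
Qed.

End UltrametricLimits.

Lemma theta_neq0 (F : finFieldType) (R : realType) (C : closedFieldType)
    (abs : C -> R) (theta : C) :
  nonarch_complete_abs abs -> abs theta = (#|F|)%:R -> theta != 0.
Proof.
case=> abs_eq0 _ _ _ _ abs_theta; apply/eqP => theta0.
move: abs_theta; rewrite theta0 (proj2 (abs_eq0 0) erefl) => /esym/eqP.
by rewrite pnatr_eq0 => /eqP/card0_eq/(_ 0).
Qed.

Section ExponentialDivision.
Variables (F : finFieldType) (R : realType) (C : closedFieldType).
Variables (abs : C -> R) (theta : C) (r : nat) (kappa alpha : nat -> C).
Hypotheses (abs_ultra : nonarch_complete_abs abs) (theta_nz : theta != 0).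
Hypothesis exp_coeffs : is_exp_coeffs F abs theta r kappa alpha.

Lemma rho_t_exp_div_theta (z w w' : C) :
  exp_at F abs alpha (z / theta) w -> exp_at F abs alpha z w' ->
  rho_t F theta r kappa w = w'.
Proof.
case: exp_coeffs => _ _ exp_theta_mul exp_w exp_w'.
have := exp_theta_mul _ _ exp_w; rewrite mulrCA divff // mulr1.
by move/cvg_to_unique; apply.
Qed.

Lemma rho_t_exp_div_thetaS (z w w' : C) (m : nat) :
  exp_at F abs alpha (z / theta ^+ m.+2) w ->
  exp_at F abs alpha (z / theta ^+ m.+1) w' ->
  rho_t F theta r kappa w = w'.
Proof.
rewrite [theta ^+ m.+2]exprSr invfM mulrA.
exact: rho_t_exp_div_theta.
Qed.

End ExponentialDivision.

Lemma iter_descending (T : Type) (f : T -> T) (x : nat -> T) :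
  (forall m, f (x m.+1) = x m) ->
  forall n m, (n <= m)%N -> iter n f (x m) = x (m - n)%N.
Proof.
move=> fS; elim=> [|n IHn] m le_nm /=; first by rewrite subn0.
by rewrite IHn 1?ltnW // -subnSK //; exact: fS.
Qed.

Lemma tate_act_psmat_mul (F : finFieldType) (C : closedFieldType)
    (iota : {rmorphism F -> C}) (theta : C) (r : nat) (kappa : nat -> C)
    (g : 'I_r -> 'I_r -> nat -> F) (x : 'I_r -> nat -> C) :
  (forall j m, rho_t F theta r kappa (x j m.+1) = x j m) ->
  forall i m, tate_act iota theta kappa g x i m = psmat_mul iota g x i m.
Proof.
move=> rho_x i m; apply: eq_bigr => j _; apply: eq_bigr => n _.
by rewrite (iter_descending (rho_x j)) // -ltnS.
Qed.

Theorem lemma3p1 (F : finFieldType) (R : realType) (C : closedFieldType)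
  (abs : C -> R) (iota : {rmorphism F -> C}) (theta : C)
  (Habs : nonarch_complete_abs abs)
  (Habs_F : forall c : F, c != 0 -> abs (iota c) = 1)
  (Habs_theta : abs theta = (#|F|)%:R)
  (r : nat) (Hr : (0 < r)%N) (kappa : nat -> C) (Hkappa_r : kappa r != 0)
  (K : C -> Prop) (HK : is_subfield K) (HK_F : forall c : F, K (iota c))
  (HK_theta : K theta) (HK_kappa : forall j, (1 <= j <= r)%N -> K (kappa j))
  (HK_kbar : forall x, K x -> in_kbar iota theta x)
  (alpha : nat -> C) (Hexp : is_exp_coeffs F abs theta r kappa alpha)
  (omega : 'I_r -> C) (Homega : is_A_basis_lattice abs iota theta alpha omega)
  (xi : 'I_r -> nat -> C)
  (Hxi : forall i m, exp_at F abs alpha (omega i / theta ^+ m.+1) (xi i m))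
  (eps : C -> C) (Heps : is_gal_elt K eps)
  (g : 'I_r -> 'I_r -> nat -> F)
  (Hg : forall i m, eps (xi i m) = tate_act iota theta kappa g xi i m) :
  forall i m, eps (xi i m) = psmat_mul iota g xi i m.
Proof.
have theta_nz := theta_neq0 Habs Habs_theta.
have rho_xi j m : rho_t F theta r kappa (xi j m.+1) = xi j m.
  exact: rho_t_exp_div_thetaS Habs theta_nz Hexp _ _ _ _ (Hxi j m.+1) (Hxi j m).
by move=> i m; rewrite Hg tate_act_psmat_mul.
Qed.
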